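(* Let $\Delta\ge3$ and $k\ge2$, and let $X$ be the $k\times k$ symmetric tridiagonal matrix with diagonal entries $0,\dots,0,2$ (zeros in positions $1,\dots,k-1$ and $2$ in position $k$), off-diagonal entries in positions $(j,j+1),(j+1,j)$ equal to $\sqrt{\Delta-1}$ for $1\le j\le k-2$, and equal to $\sqrt{\Delta-2}$ for $j=k-1$. If $\Delta\ge4$, or $\Delta=3$ and $k\ge4$, then \[ \rho(X)<2\sqrt{\Delta-1}\cos\frac{\pi}{2k+1}, \] where $\rho(X)$ is the spectral radius of $X$. *)

From Stdlib Require Import Reals Lra Lia Arith ClassicalEpsilon.
Open Scope R_scope.

Fixpoint rsum (n : nat) (f : nat -> R) : R :=
  match n with
  | O => 0
  | S m => rsum m f + f m
  end.

(* The tridiagonal matrix X (0-based indices 0..k-1):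
   diagonal: 0 except the last entry (index k-1) which is 2;
   entries (i,i+1),(i+1,i): sqrt(Delta-1) if i+1 <= k-2, sqrt(Delta-2) if i+1 = k-1;
   all other entries 0. *)
Definition Xmat (Delta k : nat) (i j : nat) : R :=
  if Nat.eqb i j then (if Nat.eqb i (k - 1) then 2 else 0)
  else if orb (Nat.eqb j (S i)) (Nat.eqb i (S j)) then
    (if Nat.eqb (Nat.max i j) (k - 1) then sqrt (INR Delta - 2)
     else sqrt (INR Delta - 1))
  else 0.

Definition is_eigenvalue (k : nat) (M : nat -> nat -> R) (lambda : R) : Prop :=
  exists v : nat -> R,
    (exists i, (i < k)%nat /\ v i <> 0) /\
    forall i, (i < k)%nat -> rsum k (fun j => M i j * v j) = lambda * v i.

Definition spectral_radius (k : nat) (M : nat -> nat -> R) : R :=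
  epsilon (inhabits 0)
    (is_lub (fun r => exists lambda, is_eigenvalue k M lambda /\ r = Rabs lambda)).

From Stdlib Require Import Reals Lra Lia ClassicalEpsilon.
Open Scope R_scope.

(* Write s = sqrt (Delta - 1), t = sqrt (Delta - 2) and theta = PI / (2 k + 1).
   Since X is tridiagonal with nonzero superdiagonal, its eigenvalues are the zeros of
   a continuous function of l obtained from the three-term recurrence for eigenvectors;
   hence an eigenvalue exists (intermediate values between 2 s cos (PI / k) and 2 s) and
   the supremum defining the spectral radius is attained.  For the bound, the positive
   vector u_i = sin ((i + 1) theta), with its last entry rescaled by s / t, satisfies
   X u = 2 s cos theta u in every row but the last; because sin ((k + 1) theta) =
   sin (k theta), the last row has X u < 2 s cos theta u exactly when
   1 + 2 s - s^2 < 2 cos theta, which is where the hypothesis on (Delta, k) enters.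
   A Collatz-Wielandt argument then bounds every eigenvalue strictly. *)

Lemma rsum_ext n f g : (forall j, (j < n)%nat -> f j = g j) -> rsum n f = rsum n g.
Proof.
  induction n as [|n IH]; intros H; simpl; [reflexivity|].
  rewrite IH, H; [reflexivity | lia | intros j Hj; apply H; lia].
Qed.

Lemma rsum_le n f g : (forall j, (j < n)%nat -> f j <= g j) -> rsum n f <= rsum n g.
Proof.
  induction n as [|n IH]; intros H; simpl; [lra|].
  assert (rsum n f <= rsum n g) by (apply IH; intros j Hj; apply H; lia).
  assert (f n <= g n) by (apply H; lia).
  lra.
Qed.

Lemma rsum_minus n f g : rsum n (fun j => f j - g j) = rsum n f - rsum n g.
Proof. induction n as [|n IH]; simpl; [ring|]. rewrite IH; ring. Qed.

Lemma rsum_scal n a f : rsum n (fun j => a * f j) = a * rsum n f.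
Proof. induction n as [|n IH]; simpl; [ring|]. rewrite IH; ring. Qed.

Lemma Rabs_rsum_le n f : Rabs (rsum n f) <= rsum n (fun j => Rabs (f j)).
Proof.
  induction n as [|n IH]; simpl; [rewrite Rabs_R0; lra|].
  eapply Rle_trans; [apply Rabs_triang | lra].
Qed.

Lemma rsum_nonneg n f : (forall j, (j < n)%nat -> 0 <= f j) -> 0 <= rsum n f.
Proof.
  induction n as [|n IH]; intros H; simpl; [lra|].
  assert (0 <= rsum n f) by (apply IH; intros j Hj; apply H; lia).
  assert (0 <= f n) by (apply H; lia).
  lra.
Qed.

Lemma rsum_ge_term n f i :
  (forall j, (j < n)%nat -> 0 <= f j) -> (i < n)%nat -> f i <= rsum n f.
Proof.
  induction n as [|n IH]; intros H Hi; simpl; [lia|].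
  destruct (Nat.eq_dec i n) as [->|Hin].
  - assert (0 <= rsum n f) by (apply rsum_nonneg; intros j Hj; apply H; lia). lra.
  - assert (f i <= rsum n f) by (apply IH; [intros j Hj; apply H|]; lia).
    assert (0 <= f n) by (apply H; lia). lra.
Qed.

Lemma rsum_zero_tail m n f :
  (m <= n)%nat -> (forall j, (m <= j < n)%nat -> f j = 0) -> rsum n f = rsum m f.
Proof.
  induction n as [|n IH]; intros Hmn H.
  - replace m with 0%nat by lia; reflexivity.
  - destruct (Nat.eq_dec m (S n)) as [->|Hm]; [reflexivity|].
    simpl. rewrite IH, H; [ring | lia | lia | intros j Hj; apply H; lia].
Qed.

Lemma finite_argmax n (r : nat -> R) :
  (0 < n)%nat -> exists i0, (i0 < n)%nat /\ forall i, (i < n)%nat -> r i <= r i0.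
Proof.
  induction n as [|n IH]; intros Hn; [lia|].
  destruct (Nat.eq_dec n 0) as [->|Hn0].
  - exists 0%nat. split; [lia|]. intros i Hi. replace i with 0%nat by lia. lra.
  - destruct (IH ltac:(lia)) as [i0 [Hi0 Hmax]].
    destruct (Rle_dec (r n) (r i0)) as [Hle|Hlt].
    + exists i0. split; [lia|]. intros i Hi.
      destruct (Nat.eq_dec i n) as [->|]; [exact Hle | apply Hmax; lia].
    + exists n. split; [lia|]. intros i Hi.
      destruct (Nat.eq_dec i n) as [->|]; [lra|].
      specialize (Hmax i ltac:(lia)). lra.
Qed.

Lemma is_lub_zero_of_continuity_pt (E : R -> Prop) (g : R -> R) L :
  continuity_pt g L -> (forall r, E r -> g r = 0) -> is_lub E L -> g L = 0.
Proof.
  intros Hg HE [HLub HLleast]. apply NNPP. intros HgL.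
  destruct (Hg (Rabs (g L)) (Rabs_pos_lt _ HgL)) as [alp [Halp Hnear]].
  assert (Hr : exists r, E r /\ L - alp / 2 < r).
  { apply NNPP. intros Hno.
    assert (L <= L - alp / 2); [|lra].
    apply HLleast. intros r Hr. apply Rnot_lt_le. intros Hlt. apply Hno. exists r; auto. }
  destruct Hr as [r [Hr HrL]].
  assert (r <= L) by (apply HLub; exact Hr).
  destruct (Req_dec r L) as [<-|HrL'].
  - exact (HgL (HE r Hr)).
  - specialize (Hnear r). simpl in Hnear. unfold R_dist in Hnear.
    rewrite (HE r Hr), Rminus_0_l, Rabs_Ropp in Hnear.
    assert (Rabs (r - L) < alp) by (rewrite Rabs_left1; lra).
    specialize (Hnear (conj (conj I (not_eq_sym HrL')) H0)). lra.
Qed.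

Lemma sin_add_sin_sub x a : sin (x + a) + sin (x - a) = 2 * cos a * sin x.
Proof. rewrite sin_plus, sin_minus. ring. Qed.

Lemma PI_le_3_24 : PI <= 324 / 100.
Proof.
  pose proof PI_RGT_0. pose proof PI_4.
  destruct (SIN (PI / 6) ltac:(lra) ltac:(lra)) as [Hsin _]. rewrite sin_PI6 in Hsin.
  unfold sin_lb, sin_approx, sin_term in Hsin. simpl in Hsin.
  set (a := PI / 6) in *.
  assert (Ha : 0 <= a <= 4 / 6) by (unfold a; lra).
  assert (HPa : PI = 6 * a) by (unfold a; field). clearbody a.
  assert (0 <= a * (a * (a * (a * (a * 1)))) / 120
               - a * (a * (a * (a * (a * (a * (a * 1)))))) / 5040).
  { assert (0 <= a * a * a * a * a) by (repeat apply Rmult_le_pos; lra).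
    assert (a * a <= 1) by nra. nra. }
  assert (a * (a * (a * 1)) <= 4 / 9 * a) by nra.
  assert (a <= 54 / 100) by (field_simplify in Hsin; lra).
  lra.
Qed.

Lemma cos_ge_1_sub_half_sqr x : 0 <= x <= PI / 2 -> 1 - x * x / 2 <= cos x.
Proof.
  intros Hx. pose proof PI_4.
  destruct (COS x ltac:(lra) ltac:(lra)) as [Hcos _].
  unfold cos_lb, cos_approx, cos_term in Hcos. simpl in Hcos.
  assert (x * x <= 4) by nra.
  assert (0 <= x * x * x * x) by (repeat apply Rmult_le_pos; lra).
  assert (x * x * x * x * x * x <= 30 * (x * x * x * x)) by nra.
  field_simplify in Hcos. nra.
Qed.

Lemma continuity_affine_step (f g : R -> R) a b :
  continuity f -> continuity g -> continuity (fun l => (l - a) * f l - b * g l).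
Proof.
  intros Hf Hg.
  apply (continuity_minus (fun l => (l - a) * f l) (fun l => b * g l)).
  - apply (continuity_mult (fun l => l - a) f); [|exact Hf].
    apply (continuity_minus id (fun _ => a)).
    + apply derivable_continuous, derivable_id.
    + apply continuity_const. intros ? ?; reflexivity.
  - apply (continuity_scal g b Hg).
Qed.

(* Along a maximiser of [|v i| / u i]
   the hypothesis [c <= |l|] forces equality, and the positive superdiagonal carries that
   equality down to the last row, where it is impossible. *)
Section TestVectorBound.

Variables (n : nat) (M : nat -> nat -> R) (u : nat -> R) (c : R).
Hypothesis M_nonneg : forall i j, (i < n)%nat -> (j < n)%nat -> 0 <= M i j.
Hypothesis M_super_pos : forall i, (S i < n)%nat -> 0 < M i (S i).
Hypothesis u_pos : forall i, (i < n)%nat -> 0 < u i.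
Hypothesis Mu_le : forall i, (S i < n)%nat -> rsum n (fun j => M i j * u j) <= c * u i.
Hypothesis Mu_last_lt : rsum n (fun j => M (n - 1) j * u j) < c * u (n - 1)%nat.

Section Eigenvector.

Variables (l m : R) (v : nat -> R).
Hypothesis v_dominated : forall j, (j < n)%nat -> Rabs (v j) <= m * u j.
Hypothesis v_eigen : forall i, (i < n)%nat -> rsum n (fun j => M i j * v j) = l * v i.

Let slack i := rsum n (fun j => M i j * (m * u j - Rabs (v j))).

Lemma slack_nonneg i : (i < n)%nat -> 0 <= slack i.
Proof.
  intros Hi. apply rsum_nonneg. intros j Hj.
  apply Rmult_le_pos; [apply M_nonneg; auto|]. specialize (v_dominated j Hj). lra.
Qed.

Lemma eigen_row_slack i :
  (i < n)%nat -> Rabs l * Rabs (v i) + slack i <= m * rsum n (fun j => M i j * u j).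
Proof.
  intros Hi.
  assert (Rabs l * Rabs (v i) <= rsum n (fun j => M i j * Rabs (v j))).
  { rewrite <- Rabs_mult, <- (v_eigen i Hi).
    eapply Rle_trans; [apply Rabs_rsum_le|]. apply rsum_le. intros j Hj.
    rewrite Rabs_mult, (Rabs_pos_eq (M i j)) by (apply M_nonneg; auto). lra. }
  assert (slack i = m * rsum n (fun j => M i j * u j) - rsum n (fun j => M i j * Rabs (v j))).
  { unfold slack. rewrite <- rsum_scal, <- rsum_minus. apply rsum_ext. intros; ring. }
  lra.
Qed.

Lemma tight_succ i :
  c <= Rabs l -> 0 <= m -> (S i < n)%nat -> Rabs (v i) = m * u i ->
  Rabs (v (S i)) = m * u (S i).
Proof.
  intros Hcl Hm Hi Htight.
  pose proof (eigen_row_slack i ltac:(lia)) as Hrow.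
  assert (m * rsum n (fun j => M i j * u j) <= m * (c * u i))
    by (apply Rmult_le_compat_l; auto).
  assert (c * (m * u i) <= Rabs l * Rabs (v i)).
  { rewrite Htight. apply Rmult_le_compat_r; auto.
    apply Rmult_le_pos; auto. apply Rlt_le, u_pos; lia. }
  assert (M i (S i) * (m * u (S i) - Rabs (v (S i))) <= slack i).
  { apply (rsum_ge_term n (fun j => M i j * (m * u j - Rabs (v j)))); [|exact Hi].
    intros j Hj. apply Rmult_le_pos; [apply M_nonneg; lia|].
    specialize (v_dominated j Hj). lra. }
  assert (m * u (S i) - Rabs (v (S i)) <= 0).
  { apply (Rmult_le_reg_l (M i (S i))); [apply M_super_pos; auto|]. lra. }
  specialize (v_dominated (S i) Hi). lra.
Qed.

Lemma not_tight_last :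
  (0 < n)%nat -> c <= Rabs l -> 0 < m -> Rabs (v (n - 1)%nat) <> m * u (n - 1)%nat.
Proof.
  intros Hn Hcl Hm Htight.
  pose proof (eigen_row_slack (n - 1) ltac:(lia)) as Hrow.
  pose proof (slack_nonneg (n - 1) ltac:(lia)).
  assert (m * rsum n (fun j => M (n - 1) j * u j) < m * (c * u (n - 1)%nat))
    by (apply Rmult_lt_compat_l; auto).
  assert (c * (m * u (n - 1)%nat) <= Rabs l * Rabs (v (n - 1)%nat)).
  { rewrite Htight. apply Rmult_le_compat_r; auto.
    apply Rmult_le_pos; [lra|]. apply Rlt_le, u_pos; lia. }
  lra.
Qed.

End Eigenvector.

Lemma Rabs_eigenvalue_lt_of_test_vector l : is_eigenvalue n M l -> Rabs l < c.
Proof.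
  intros [v [[j0 [Hj0 Hv0]] Hrow]]. apply Rnot_le_lt. intros Hcl.
  destruct (finite_argmax n (fun i => Rabs (v i) / u i) ltac:(lia)) as [i0 [Hi0 Hmax]].
  set (m := Rabs (v i0) / u i0) in *.
  assert (Hdom : forall j, (j < n)%nat -> Rabs (v j) <= m * u j).
  { intros j Hj. specialize (Hmax j Hj). pose proof (u_pos j Hj).
    apply (Rmult_le_compat_r (u j)) in Hmax; [|lra].
    unfold Rdiv in Hmax. rewrite Rmult_assoc, Rinv_l in Hmax; lra. }
  assert (Hm : 0 < m).
  { pose proof (Hdom j0 Hj0). pose proof (Rabs_pos_lt _ Hv0). pose proof (u_pos j0 Hj0). nra. }
  assert (Htight : forall d, (i0 + d < n)%nat -> Rabs (v (i0 + d)%nat) = m * u (i0 + d)%nat).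
  { induction d as [|d IH]; intros Hd.
    - rewrite Nat.add_0_r. unfold m. field. pose proof (u_pos i0 Hi0). lra.
    - rewrite Nat.add_succ_r.
      apply (tight_succ l m v Hdom Hrow); [lra | lra | lia | apply IH; lia]. }
  apply (not_tight_last l m v Hdom Hrow); [lia | lra | lra |].
  replace (n - 1)%nat with (i0 + (n - 1 - i0))%nat by lia. apply Htight. lia.
Qed.

End TestVectorBound.

Definition prepend0 (v : nat -> R) (j : nat) : R :=
  match j with O => 0 | S j' => v j' end.

Section BandMatrix.

Variables (n : nat) (M : nat -> nat -> R).
Hypothesis M_band : forall i j, (S i < j)%nat \/ (S j < i)%nat -> M i j = 0.

(* Vectors are shifted by one ([w (S j)] is entry [j]) with [w 0 = 0], so that the
   subdiagonal term of row 0 vanishes instead of needing a special case. *)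
Lemma rsum_band_row_upto i w :
  w 0%nat = 0 -> rsum (S i) (fun j => M i j * w (S j)) = M i (i - 1) * w i + M i i * w (S i).
Proof.
  intros Hw0. destruct i as [|p]; simpl.
  - rewrite Hw0. ring.
  - rewrite (rsum_zero_tail 0 p) by (try lia; intros j Hj; rewrite M_band by lia; ring).
    rewrite Nat.sub_0_r. simpl. ring.
Qed.

Lemma rsum_band_row i w : w 0%nat = 0 -> (S i < n)%nat ->
  rsum n (fun j => M i j * w (S j)) =
  M i (i - 1) * w i + M i i * w (S i) + M i (S i) * w (S (S i)).
Proof.
  intros Hw0 Hi.
  rewrite (rsum_zero_tail (S (S i))) by (try lia; intros j Hj; rewrite M_band by lia; ring).
  change (rsum (S (S i)) ?f) with (rsum (S i) f + f (S i)).
  rewrite rsum_band_row_upto by exact Hw0. reflexivity.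
Qed.

(* [continuant l (S j)] is the entry [j] of the solution of the first [n - 1] rows of
   [M x = l x] normalised by [x 0 = 1]. *)
Fixpoint continuant (l : R) (i : nat) : R :=
  match i with
  | O => 0
  | S O => 1
  | S (S m as m') =>
      ((l - M m m) * continuant l m' - M m (m - 1) * continuant l m) / M m (S m)
  end.

Lemma continuant_SS l m : continuant l (S (S m)) =
  ((l - M m m) * continuant l (S m) - M m (m - 1) * continuant l m) / M m (S m).
Proof. reflexivity. Qed.

Definition continuant_residual (l : R) : R :=
  (l - M (n - 1) (n - 1)) * continuant l n - M (n - 1) (n - 2) * continuant l (n - 1).

Lemma continuity_continuant i : continuity (fun l => continuant l i).
Proof.
  enough (H : continuity (fun l => continuant l i) /\ continuity (fun l => continuant l (S i)))
    by apply H.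
  induction i as [|i [IH1 IH2]].
  - split; apply continuity_const; intros ? ?; reflexivity.
  - split; [exact IH2|]. unfold continuant at 1; fold continuant. unfold Rdiv.
    apply (continuity_mult _ (fun _ => / M i (S i))).
    + apply continuity_affine_step; assumption.
    + apply continuity_const. intros ? ?; reflexivity.
Qed.

Lemma continuity_continuant_residual : continuity continuant_residual.
Proof. apply continuity_affine_step; apply continuity_continuant. Qed.

Hypothesis M_super_neq0 : forall i, (S i < n)%nat -> M i (S i) <> 0.
Hypothesis n_pos : (0 < n)%nat.

Lemma continuant_row l i : (S i < n)%nat ->
  rsum n (fun j => M i j * continuant l (S j)) = l * continuant l (S i).
Proof.
  intros Hi. rewrite rsum_band_row by (reflexivity || exact Hi).
  rewrite continuant_SS. field. apply M_super_neq0, Hi.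
Qed.

Lemma is_eigenvalue_of_residual l : continuant_residual l = 0 -> is_eigenvalue n M l.
Proof.
  intros Hres. exists (fun j => continuant l (S j)). split.
  - exists 0%nat. split; [exact n_pos|]. simpl. lra.
  - intros i Hi. destruct (Nat.eq_dec (S i) n) as [Hin|Hin].
    + rewrite <- Hin, rsum_band_row_upto by reflexivity.
      unfold continuant_residual in Hres. rewrite <- Hin in Hres.
      replace (S i - 1)%nat with i in Hres by lia.
      replace (S i - 2)%nat with (i - 1)%nat in Hres by lia.
      lra.
    + apply continuant_row. lia.
Qed.

Lemma eigenvector_eq_continuant l v :
  (forall i, (i < n)%nat -> rsum n (fun j => M i j * v j) = l * v i) ->
  forall j, (j <= n)%nat -> prepend0 v j = v 0%nat * continuant l j.
Proof.
  intros Hrow.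
  assert (Hpair : forall j, (j < n)%nat ->
    prepend0 v j = v 0%nat * continuant l j /\
    prepend0 v (S j) = v 0%nat * continuant l (S j)).
  { induction j as [|j IH]; intros Hj.
    - simpl. split; ring.
    - destruct (IH ltac:(lia)) as [E0 E1]. split; [exact E1|].
      pose proof (Hrow j ltac:(lia)) as Hj'.
      change (rsum n (fun x => M j x * prepend0 v (S x)) = l * prepend0 v (S j)) in Hj'.
      rewrite rsum_band_row, E0, E1 in Hj' by (reflexivity || exact Hj).
      rewrite continuant_SS.
      pose proof (M_super_neq0 j Hj) as Hsup.
      replace (prepend0 v (S (S j))) with (M j (S j) * prepend0 v (S (S j)) / M j (S j))
        by (field; exact Hsup).
      replace (M j (S j) * prepend0 v (S (S j))) with
        (l * (v 0%nat * continuant l (S j)) - M j (j - 1) * (v 0%nat * continuant l j)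
         - M j j * (v 0%nat * continuant l (S j))) by lra.
      field. exact Hsup. }
  intros j Hj. destruct (Nat.eq_dec j n) as [->|Hjn].
  - replace n with (S (n - 1)) by lia. apply Hpair. lia.
  - apply Hpair. lia.
Qed.

Lemma residual_of_is_eigenvalue l : is_eigenvalue n M l -> continuant_residual l = 0.
Proof.
  intros [v [[i0 [Hi0 Hv0]] Hrow]].
  pose proof (eigenvector_eq_continuant l v Hrow) as Hv.
  assert (Hv00 : v 0%nat <> 0).
  { intros H0. apply Hv0. change (prepend0 v (S i0) = 0). rewrite Hv, H0 by lia. ring. }
  pose proof (Hrow (n - 1)%nat ltac:(lia)) as Hlast.
  change (rsum n (fun x => M (n - 1)%nat x * prepend0 v (S x))
          = l * prepend0 v (S (n - 1))) in Hlast.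
  replace n with (S (n - 1)) in Hlast at 1 by lia.
  rewrite rsum_band_row_upto in Hlast by reflexivity.
  replace (S (n - 1)) with n in Hlast by lia.
  replace (n - 1 - 1)%nat with (n - 2)%nat in Hlast by lia.
  rewrite !Hv in Hlast by lia.
  apply (Rmult_eq_reg_l (v 0%nat)); [|exact Hv00].
  unfold continuant_residual. lra.
Qed.

(* The eigenvalues are the zeros of the continuous function [continuant_residual], so the
   supremum of their moduli is attained. *)
Lemma spectral_radius_attained l0 b :
  is_eigenvalue n M l0 -> (forall l, is_eigenvalue n M l -> Rabs l <= b) ->
  exists l, is_eigenvalue n M l /\ spectral_radius n M = Rabs l.
Proof.
  intros Hl0 Hb.
  set (E := fun r => exists l, is_eigenvalue n M l /\ r = Rabs l).
  assert (Hex : exists L, is_lub E L).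
  { destruct (completeness E) as [L HL].
    - exists b. intros r [l [Hl ->]]. apply Hb, Hl.
    - exists (Rabs l0), l0. auto.
    - exists L. exact HL. }
  pose proof (epsilon_spec (inhabits 0) (is_lub E) Hex) as HL.
  fold (spectral_radius n M) in HL.
  set (L := spectral_radius n M) in *.
  set (g := fun r => continuant_residual r * continuant_residual (- r)).
  assert (HgL : g L = 0).
  { apply (is_lub_zero_of_continuity_pt E g L); [| |exact HL].
    - apply (continuity_mult continuant_residual (fun r => continuant_residual (- r))).
      + apply continuity_continuant_residual.
      + apply (continuity_comp Ropp continuant_residual).
        * apply continuity_opp, derivable_continuous, derivable_id.
        * apply continuity_continuant_residual.
    - intros r [l [Hl ->]]. unfold g.
      destruct (Rcase_abs l) as [Hneg|Hpos].
      + rewrite Rabs_left, Ropp_involutive, (residual_of_is_eigenvalue l Hl) by exact Hneg.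
        ring.
      + rewrite Rabs_right, (residual_of_is_eigenvalue l Hl) by exact Hpos. ring. }
  assert (0 <= L).
  { destruct HL as [HLub _]. apply Rle_trans with (Rabs l0); [apply Rabs_pos|].
    apply HLub. exists l0. auto. }
  apply Rmult_integral in HgL as [H0|H0]; apply is_eigenvalue_of_residual in H0.
  - exists L. split; [exact H0|]. rewrite Rabs_right; lra.
  - exists (- L). split; [exact H0|]. rewrite Rabs_Ropp, Rabs_right; lra.
Qed.

End BandMatrix.

Section Xmat.

Variables (Delta k : nat).

Local Notation s := (sqrt (INR Delta - 1)).
Local Notation t := (sqrt (INR Delta - 2)).
Local Notation X := (Xmat Delta k).

Lemma Xmat_band i j : (S i < j)%nat \/ (S j < i)%nat -> X i j = 0.
Proof.
  intros H. unfold Xmat.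
  destruct (Nat.eqb_spec i j); [lia|].
  destruct (Nat.eqb_spec j (S i)); [lia|].
  destruct (Nat.eqb_spec i (S j)); [lia|].
  reflexivity.
Qed.

Lemma Xmat_nonneg i j : 0 <= X i j.
Proof.
  unfold Xmat. destruct (Nat.eqb i j); [destruct (Nat.eqb i (k - 1)); lra|].
  destruct (orb _ _); [destruct (Nat.eqb _ _); apply sqrt_pos | lra].
Qed.

Lemma Xmat_diag i : X i i = if Nat.eqb i (k - 1) then 2 else 0.
Proof. unfold Xmat. rewrite Nat.eqb_refl. reflexivity. Qed.

Lemma Xmat_super i : X i (S i) = if Nat.eqb (S i) (k - 1) then t else s.
Proof.
  unfold Xmat. rewrite (proj2 (Nat.eqb_neq i (S i))), Nat.eqb_refl by lia.
  rewrite Nat.max_r by lia. reflexivity.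
Qed.

Lemma Xmat_sub i : X (S i) i = if Nat.eqb (S i) (k - 1) then t else s.
Proof.
  unfold Xmat.
  rewrite (proj2 (Nat.eqb_neq (S i) i)), (proj2 (Nat.eqb_neq i (S (S i)))), Nat.eqb_refl
    by lia.
  rewrite Nat.max_l by lia. reflexivity.
Qed.

Hypothesis Delta_ge3 : (3 <= Delta)%nat.
Hypothesis k_ge2 : (2 <= k)%nat.

Lemma sqrt_Delta_facts :
  0 < t /\ t < s /\ s * s = INR Delta - 1 /\ t * t = INR Delta - 2.
Proof.
  pose proof (le_INR _ _ Delta_ge3) as HD. simpl in HD.
  assert (Hs : s * s = INR Delta - 1) by (apply sqrt_sqrt; lra).
  assert (Ht : t * t = INR Delta - 2) by (apply sqrt_sqrt; lra).
  assert (0 < t) by (apply sqrt_lt_R0; lra).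
  pose proof (sqrt_pos (INR Delta - 1)).
  repeat split; auto. nra.
Qed.

Lemma Xmat_last_sub : X (k - 1) (k - 2) = t.
Proof.
  pose proof (Xmat_sub (k - 2)) as H.
  replace (S (k - 2)) with (k - 1)%nat in H by lia.
  rewrite Nat.eqb_refl in H. exact H.
Qed.

Lemma Xmat_super_pos i : 0 < X i (S i).
Proof.
  destruct sqrt_Delta_facts as (Ht & Hts & _ & _).
  rewrite Xmat_super. destruct (Nat.eqb _ _); lra.
Qed.

Lemma Xmat_super_neq0 i : X i (S i) <> 0.
Proof. apply Rgt_not_eq, Xmat_super_pos. Qed.

Lemma Xmat_sub_mul i w : (S i < k)%nat -> w 0%nat = 0 -> X i (i - 1) * w i = s * w i.
Proof.
  intros Hi Hw0. destruct i as [|p].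
  - rewrite Hw0. ring.
  - replace (S p - 1)%nat with p by lia.
    rewrite Xmat_sub, (proj2 (Nat.eqb_neq (S p) (k - 1))) by lia. reflexivity.
Qed.

Lemma Xmat_continuant_rec l m : (S (S m) <= k)%nat ->
  X m (S m) * continuant X l (S (S m)) = l * continuant X l (S m) - s * continuant X l m.
Proof.
  intros Hm.
  rewrite continuant_SS, Xmat_diag, (proj2 (Nat.eqb_neq m (k - 1))) by lia.
  rewrite (Xmat_sub_mul m (continuant X l)) by (lia || reflexivity).
  field. apply Xmat_super_neq0.
Qed.

Lemma Xmat_continuant_top l :
  t * continuant X l k = l * continuant X l (k - 1) - s * continuant X l (k - 2).
Proof.
  pose proof (Xmat_continuant_rec l (k - 2) ltac:(lia)) as H.
  rewrite Xmat_super in H.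
  replace (S (S (k - 2))) with k in H by lia.
  replace (S (k - 2)) with (k - 1)%nat in H by lia.
  rewrite Nat.eqb_refl in H. exact H.
Qed.

Lemma Xmat_continuant_eq l (y : nat -> R) :
  y 0%nat = 0 -> y 1%nat = 1 ->
  (forall m, (S (S m) < k)%nat -> s * y (S (S m)) = l * y (S m) - s * y m) ->
  forall m, (m < k)%nat -> continuant X l m = y m.
Proof.
  intros Hy0 Hy1 Hrec.
  destruct sqrt_Delta_facts as (Ht & Hts & _ & _).
  assert (Hpair : forall m, (S m < k)%nat ->
    continuant X l m = y m /\ continuant X l (S m) = y (S m)).
  { induction m as [|m IH]; intros Hm.
    - simpl. auto.
    - destruct (IH ltac:(lia)) as [E0 E1]. split; [exact E1|].
      pose proof (Xmat_continuant_rec l m ltac:(lia)) as Hc.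
      rewrite Xmat_super, (proj2 (Nat.eqb_neq (S m) (k - 1))) in Hc by lia.
      rewrite E0, E1, <- Hrec in Hc by lia.
      apply (Rmult_eq_reg_l s); [exact Hc | lra]. }
  intros [|m] Hm; [simpl; auto | apply Hpair; lia].
Qed.

Lemma Xmat_residual l :
  continuant_residual k X l = (l - 2) * continuant X l k - t * continuant X l (k - 1).
Proof.
  unfold continuant_residual. rewrite Xmat_diag, Nat.eqb_refl, Xmat_last_sub. reflexivity.
Qed.

(* At [l = 2 s cos (PI / k)] the continuant is [sin (m PI / k) / sin (PI / k)] and
   vanishes at [m = k]. *)
Lemma Xmat_residual_neg : continuant_residual k X (2 * s * cos (PI / INR k)) < 0.
Proof.
  destruct sqrt_Delta_facts as (Ht & Hts & _ & _).
  assert (HkR : 2 <= INR k) by (apply (le_INR 2); lia).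
  set (a := PI / INR k).
  assert (Ha : 0 < a) by (unfold a; apply Rdiv_lt_0_compat; [apply PI_RGT_0 | lra]).
  assert (HkA : INR k * a = PI) by (unfold a; field; lra).
  assert (Hsin : forall j, (1 <= j < k)%nat -> 0 < sin (INR j * a)).
  { intros j Hj. apply sin_gt_0.
    - apply Rmult_lt_0_compat; auto. apply lt_0_INR. lia.
    - rewrite <- HkA. apply Rmult_lt_compat_r; auto. apply lt_INR. lia. }
  assert (Hsa : 0 < sin a).
  { replace a with (INR 1 * a) by (simpl; ring). apply Hsin. lia. }
  set (l0 := 2 * s * cos a).
  assert (Hy : forall m, (m < k)%nat -> continuant X l0 m = sin (INR m * a) / sin a).
  { apply Xmat_continuant_eq.
    - simpl. rewrite Rmult_0_l, sin_0. field. lra.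
    - replace (INR 1 * a) with a by (simpl; ring). field. lra.
    - intros m Hm.
      replace (INR (S (S m)) * a) with (INR (S m) * a + a) by (rewrite (S_INR (S m)); ring).
      replace (INR m * a) with (INR (S m) * a - a) by (rewrite (S_INR m); ring).
      replace (sin (INR (S m) * a + a))
        with (2 * cos a * sin (INR (S m) * a) - sin (INR (S m) * a - a))
        by (rewrite <- sin_add_sin_sub; ring).
      unfold l0. field. lra. }
  assert (Hk0 : continuant X l0 k = 0).
  { pose proof (Xmat_continuant_top l0) as Htop.
    rewrite (Hy (k - 1)%nat), (Hy (k - 2)%nat) in Htop by lia.
    replace (INR (k - 2) * a) with (INR (k - 1) * a - a) in Htop
      by (rewrite !minus_INR by lia; simpl; ring).
    pose proof (sin_add_sin_sub (INR (k - 1) * a) a) as E.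
    replace (INR (k - 1) * a + a) with PI in E by (rewrite minus_INR by lia; simpl; lra).
    rewrite sin_PI in E.
    apply (Rmult_eq_reg_l t); [|lra]. rewrite Htop.
    replace (sin (INR (k - 1) * a - a)) with (2 * cos a * sin (INR (k - 1) * a)) by lra.
    unfold l0. field. lra. }
  rewrite Xmat_residual, Hk0, Hy by lia.
  pose proof (Hsin (k - 1)%nat ltac:(lia)).
  assert (0 < sin (INR (k - 1) * a) / sin a) by (apply Rdiv_lt_0_compat; lra).
  nra.
Qed.

(* At [l = 2 s] the continuant is linear: [continuant X (2 s) m = m] below the last row. *)
Lemma Xmat_residual_pos : 0 < continuant_residual k X (2 * s).
Proof.
  destruct sqrt_Delta_facts as (Ht & Hts & Hs2 & Ht2).
  pose proof (le_INR _ _ Delta_ge3) as HD. simpl in HD.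
  assert (HkR : 2 <= INR k) by (apply (le_INR 2); lia).
  assert (Hy : forall m, (m < k)%nat -> continuant X (2 * s) m = INR m).
  { apply Xmat_continuant_eq; [reflexivity | reflexivity |].
    intros m _. rewrite !S_INR. ring. }
  assert (Hck : t * continuant X (2 * s) k = s * INR k).
  { rewrite Xmat_continuant_top, !Hy, !minus_INR by lia. simpl. ring. }
  apply (Rmult_lt_reg_l t); [exact Ht|].
  rewrite Rmult_0_r, Xmat_residual, (Hy (k - 1)%nat), minus_INR by lia.
  replace (t * ((2 * s - 2) * continuant X (2 * s) k - t * (INR k - INR 1)))
    with ((2 * s - 2) * (t * continuant X (2 * s) k) - t * t * (INR k - 1))
    by (simpl; ring).
  rewrite Hck. replace (t * t) with (s * s - 1) by lra.
  assert (0 <= INR k * ((s - 1) * (s - 1))) by (apply Rmult_le_pos; nra).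
  nra.
Qed.

Lemma Xmat_has_eigenvalue : exists l, is_eigenvalue k X l.
Proof.
  pose proof Xmat_residual_neg as Hneg. pose proof Xmat_residual_pos as Hpos.
  set (l0 := 2 * s * cos (PI / INR k)) in Hneg.
  assert (Hl0 : l0 < 2 * s).
  { destruct (Req_dec l0 (2 * s)) as [E|E]; [rewrite E in Hneg; lra|].
    destruct sqrt_Delta_facts as (Ht & Hts & _ & _).
    pose proof (COS_bound (PI / INR k)) as [_ Hcos].
    assert (l0 <= 2 * s) by (unfold l0; nra). lra. }
  destruct (IVT (continuant_residual k X) l0 (2 * s)) as [z [_ Hz]];
    [apply continuity_continuant_residual | lra | lra | lra |].
  exists z. apply is_eigenvalue_of_residual; [exact Xmat_band | | lia | exact Hz].
  intros i _. apply Xmat_super_neq0.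
Qed.

Hypothesis Delta_k_case : (4 <= Delta)%nat \/ (Delta = 3%nat /\ (4 <= k)%nat).

Local Notation theta := (PI / INR (2 * k + 1)).

Lemma Xmat_margin : 1 + 2 * s - s * s < 2 * cos theta.
Proof.
  destruct sqrt_Delta_facts as (Ht & Hts & Hs2 & Ht2).
  pose proof PI_le_3_24. pose proof PI_RGT_0.
  set (th := theta).
  assert (H2k : 5 <= INR (2 * k + 1))
    by (replace 5 with (INR 5) by (simpl; lra); apply le_INR; lia).
  assert (Hth0 : 0 < th) by (unfold th; apply Rdiv_lt_0_compat; lra).
  assert (Hth5 : th <= PI / 5).
  { unfold th. apply Rmult_le_compat_l; [lra|]. apply Rinv_le_contravar; lra. }
  pose proof (cos_ge_1_sub_half_sqr th ltac:(lra)).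
  destruct Delta_k_case as [H4 | [H3 Hk4]].
  - destruct (Nat.eq_dec Delta 4) as [H4'|H5].
    + assert (s * s = 3) by (rewrite Hs2, H4'; simpl; lra).
      assert (s < 17321 / 10000) by nra. nra.
    + assert (5 <= INR Delta)
        by (replace 5 with (INR 5) by (simpl; lra); apply le_INR; lia).
      assert (2 <= s) by nra. nra.
  - assert (s * s = 2) by (rewrite Hs2, H3; simpl; lra).
    assert (H9 : 9 <= INR (2 * k + 1))
      by (replace 9 with (INR 9) by (simpl; lra); apply le_INR; lia).
    assert (th <= PI / 9).
    { unfold th. apply Rmult_le_compat_l; [lra|]. apply Rinv_le_contravar; lra. }
    assert (s < 14143 / 10000) by nra. nra.
Qed.

(* Entry [i] of the test vector is [Xmat_test (S i)]: the sines [sin ((i + 1) theta)],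
   with the last entry rescaled by [s / t] to absorb the smaller last superdiagonal entry. *)
Definition Xmat_test (j : nat) : R :=
  if Nat.eqb j k then s * sin (INR k * theta) / t else sin (INR j * theta).

Lemma Xmat_test_0 : Xmat_test 0 = 0.
Proof.
  unfold Xmat_test. rewrite (proj2 (Nat.eqb_neq 0 k)) by lia. simpl.
  rewrite Rmult_0_l. apply sin_0.
Qed.

Lemma sin_theta_pos j : (1 <= j <= k)%nat -> 0 < sin (INR j * theta).
Proof.
  intros Hj. assert (Hk : 0 < INR (2 * k + 1)) by (apply lt_0_INR; lia).
  apply sin_gt_0.
  - apply Rmult_lt_0_compat; [apply lt_0_INR; lia|].
    apply Rdiv_lt_0_compat; [apply PI_RGT_0 | exact Hk].
  - replace PI with (INR (2 * k + 1) * theta) at 2 by (field; lra).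
    apply Rmult_lt_compat_r; [apply Rdiv_lt_0_compat; [apply PI_RGT_0 | exact Hk]|].
    apply lt_INR. lia.
Qed.

Lemma Xmat_test_pos j : (1 <= j <= k)%nat -> 0 < Xmat_test j.
Proof.
  destruct sqrt_Delta_facts as (Ht & Hts & _ & _).
  intros Hj. unfold Xmat_test. destruct (Nat.eqb_spec j k) as [->|].
  - pose proof (sin_theta_pos k ltac:(lia)).
    apply Rdiv_lt_0_compat; [nra | lra].
  - apply sin_theta_pos. lia.
Qed.

Lemma Xmat_test_row i : (S i < k)%nat ->
  rsum k (fun j => X i j * Xmat_test (S j)) = 2 * s * cos theta * Xmat_test (S i).
Proof.
  destruct sqrt_Delta_facts as (Ht & Hts & _ & _).
  intros Hi.
  rewrite (rsum_band_row k X Xmat_band) by (exact Xmat_test_0 || exact Hi).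
  rewrite Xmat_sub_mul, Xmat_diag, (proj2 (Nat.eqb_neq i (k - 1)))
    by (exact Xmat_test_0 || lia).
  assert (Hsup : X i (S i) * Xmat_test (S (S i)) = s * sin (INR (S (S i)) * theta)).
  { unfold Xmat_test. rewrite Xmat_super.
    destruct (Nat.eqb_spec (S (S i)) k) as [E|E].
    - rewrite (proj2 (Nat.eqb_eq (S i) (k - 1))) by lia. rewrite <- E. field. lra.
    - rewrite (proj2 (Nat.eqb_neq (S i) (k - 1))) by lia. reflexivity. }
  rewrite Hsup. unfold Xmat_test.
  rewrite (proj2 (Nat.eqb_neq i k)), (proj2 (Nat.eqb_neq (S i) k)) by lia.
  replace (INR (S (S i)) * theta) with (INR (S i) * theta + theta)
    by (rewrite (S_INR (S i)); ring).
  replace (INR i * theta) with (INR (S i) * theta - theta) by (rewrite (S_INR i); ring).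
  replace (2 * s * cos theta * sin (INR (S i) * theta))
    with (s * (2 * cos theta * sin (INR (S i) * theta))) by ring.
  rewrite <- sin_add_sin_sub. ring.
Qed.

Lemma Xmat_test_last_row :
  rsum k (fun j => X (k - 1) j * Xmat_test (S j)) <
  2 * s * cos theta * Xmat_test (S (k - 1)).
Proof.
  destruct sqrt_Delta_facts as (Ht & Hts & Hs2 & Ht2).
  pose proof Xmat_margin as Hmargin.
  replace (rsum k _) with (rsum (S (k - 1)) (fun j => X (k - 1) j * Xmat_test (S j)))
    by (f_equal; lia).
  rewrite rsum_band_row_upto by (apply Xmat_band || exact Xmat_test_0).
  replace (k - 1 - 1)%nat with (k - 2)%nat by lia.
  rewrite Xmat_last_sub, Xmat_diag, Nat.eqb_refl.
  replace (S (k - 1)) with k by lia.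
  unfold Xmat_test. rewrite Nat.eqb_refl, (proj2 (Nat.eqb_neq (k - 1) k)) by lia.
  set (C := cos theta) in *.
  set (a := sin (INR k * theta)). set (b := sin (INR (k - 1) * theta)).
  assert (Ha : 0 < a) by (apply sin_theta_pos; lia).
  assert (Hb : b = (2 * C - 1) * a).
  { (* [sin ((k + 1) theta) = sin (PI - k theta) = sin (k theta)] *)
    pose proof (sin_add_sin_sub (INR k * theta) theta) as E.
    assert (HkR : INR (2 * k + 1) = 2 * INR k + 1) by (rewrite plus_INR, mult_INR; simpl; ring).
    replace (INR k * theta + theta) with (PI - INR k * theta) in E
      by (rewrite HkR; field; pose proof (pos_INR k); lra).
    replace (INR k * theta - theta) with (INR (k - 1) * theta) in E
      by (rewrite minus_INR by lia; simpl; ring).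
    rewrite sin_PI_x in E. fold a b C in E. lra. }
  apply (Rmult_lt_reg_l t); [exact Ht|].
  replace (t * (t * b + 2 * (s * a / t))) with (t * t * b + 2 * s * a) by (field; lra).
  replace (t * (2 * s * C * (s * a / t))) with (2 * s * C * s * a) by (field; lra).
  rewrite Hb. replace (t * t) with (s * s - 1) by lra.
  assert (0 < a * (2 * C - (1 + 2 * s - s * s))) by (apply Rmult_lt_0_compat; lra).
  nra.
Qed.

Lemma Xmat_eigenvalue_bound l : is_eigenvalue k X l -> Rabs l < 2 * s * cos theta.
Proof.
  apply (Rabs_eigenvalue_lt_of_test_vector k X (fun j => Xmat_test (S j))).
  - intros i j _ _. apply Xmat_nonneg.
  - intros i _. apply Xmat_super_pos.
  - intros i Hi. apply Xmat_test_pos. lia.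
  - intros i Hi. rewrite Xmat_test_row by exact Hi. lra.
  - exact Xmat_test_last_row.
Qed.

End Xmat.

Theorem mainTheorem9 (Delta k : nat) (hD : (3 <= Delta)%nat) (hk : (2 <= k)%nat)
  (hcase : (4 <= Delta)%nat \/ (Delta = 3%nat /\ (4 <= k)%nat)) :
  spectral_radius k (Xmat Delta k)
    < 2 * sqrt (INR Delta - 1) * cos (PI / INR (2 * k + 1)).
Proof.
  pose proof (Xmat_eigenvalue_bound Delta k hD hk hcase) as Hbound.
  destruct (Xmat_has_eigenvalue Delta k hD hk) as [l0 Hl0].
  destruct (spectral_radius_attained k (Xmat Delta k) (Xmat_band Delta k)
              (fun i _ => Xmat_super_neq0 Delta k hD i) ltac:(lia) l0 _ Hl0
              (fun l Hl => Rlt_le _ _ (Hbound l Hl))) as [l [Hl ->]].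
  exact (Hbound l Hl).
Qed.
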